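(* Let $A$ be an integral domain and $E$ an $A$-module such that $aE=a^2E$ for each $a\in A$. Then: (1) if $E$ is torsion-free, then $E$ is divisible; (2) if $A$ is local and $E$ is finitely generated, then $E$ is semisimple; (3) if $A$ is an Archimedean valuation domain, then $E$ is an extension of a divisible module by a semisimple module (i.e. $E$ has a divisible submodule $D$ with $E/D$ semisimple).
   Context: $E$ is divisible if $sE=E$ for every non-zero $s\in A$. A valuation domain is Archimedean if its maximal ideal is its only non-zero prime ideal. *)

From mathcomp Require Import all_boot all_order all_algebra.
Set Implicit Arguments. Unset Strict Implicit. Unset Printing Implicit Defensive.
Import GRing.Theory.
Local Open Scope ring_scope.

Section Defs.
Variable A : idomainType.

Definition is_ideal (I : A -> Prop) : Prop :=
  I 0 /\ (forall x y, I x -> I y -> I (x + y)) /\ (forall a x, I x -> I (a * x)).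

Definition proper_ideal (I : A -> Prop) : Prop := is_ideal I /\ ~ I 1.

Definition maximal_ideal (I : A -> Prop) : Prop :=
  proper_ideal I /\
  forall J : A -> Prop, is_ideal J -> (forall x, I x -> J x) ->
    (forall x, J x <-> I x) \/ (forall x, J x).

Definition prime_ideal (I : A -> Prop) : Prop :=
  proper_ideal I /\ forall a b, I (a * b) -> I a \/ I b.

Definition local_ring : Prop :=
  exists M : A -> Prop, maximal_ideal M /\
    forall N, maximal_ideal N -> forall x, N x <-> M x.

Definition valuation_domain : Prop :=
  forall a b : A, (exists c, b = a * c) \/ (exists c, a = b * c).

Definition archimedean_valuation_domain : Prop :=
  valuation_domain /\
  forall M P : A -> Prop, maximal_ideal M -> prime_ideal P ->
    (exists x, P x /\ x <> 0) -> forall x, P x <-> M x.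

Variable E : lmodType A.

Definition scaled (a : A) : E -> Prop := fun v => exists x, v = a *: x.

Definition torsion_free : Prop :=
  forall (a : A) (x : E), a *: x = 0 -> a = 0 \/ x = 0.

Definition divisible : Prop :=
  forall s : A, s <> 0 -> forall v : E, scaled s v.

Definition finitely_generated : Prop :=
  exists s : seq E, forall v : E,
    exists c : 'I_(size s) -> A, v = \sum_(i < size s) c i *: s`_i.

Definition submodule (N : E -> Prop) : Prop :=
  N 0 /\ (forall x y, N x -> N y -> N (x + y)) /\ (forall a x, N x -> N (a *: x)).

Definition semisimple : Prop :=
  forall N, submodule N -> exists N', submodule N' /\
    (forall x, N x -> N' x -> x = 0) /\
    (forall v, exists x y, N x /\ N' y /\ v = x + y).

Definition divisible_submodule (D : E -> Prop) : Prop :=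
  forall s : A, s <> 0 -> forall v, D v -> exists x, D x /\ v = s *: x.

(* E / D is semisimple, expressed through the correspondence between
   submodules of E/D and submodules of E containing D: every submodule
   N ⊇ D has a complement N' ⊇ D with N ∩ N' = D and N + N' = E. *)
Definition quotient_semisimple (D : E -> Prop) : Prop :=
  forall N, submodule N -> (forall x, D x -> N x) ->
    exists N', submodule N' /\ (forall x, D x -> N' x) /\
    (forall x, N x -> N' x -> D x) /\
    (forall v, exists x y, N x /\ N' y /\ v = x + y).

End Defs.

(* (1) From s v = s^2 y we get s (v - s y) = 0, so torsion-freeness gives v = s y.
   (2) For a in the maximal ideal of a local ring, aE = a^2E, and an induction on
   the generators of E (Nakayama's trick with the units 1 - a c) gives aE = 0.
   (3) In an Archimedean valuation domain the radical of aA (a a non-zero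
   non-unit) is a non-zero prime, hence the maximal ideal, so every non-unit r
   has a power in aA; iterating aE = a^2E then gives rE <= aE.  Thus D = aE is
   divisible and every non-unit maps E into D.
   Both semisimplicity claims follow from one Zorn argument: when every scalar is
   a unit or maps E into D, a maximal submodule X containing D with N /\ X <= D
   is a complement of N modulo D. *)
From Pilot Require Import Defs.
From mathcomp Require Import all_boot all_order all_algebra.
From mathcomp Require Import boolp classical_sets.
Set Implicit Arguments. Unset Strict Implicit. Unset Printing Implicit Defensive.
Import GRing.Theory.
Local Open Scope ring_scope.

Section ZornAbove.
Local Open Scope classical_set_scope.

Lemma Zorn_bigcup_above (T : Type) (P : set (set T)) (X0 : set T) : P X0 ->
  (forall F : set (set T), F `<=` P -> total_on F subset -> F X0 ->
     P (\bigcup_(X in F) X)) ->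
  exists A, [/\ P A, X0 `<=` A & forall B, P B -> A `<=` B -> B `<=` A].
Proof.
move=> PX0 chainP; pose Q X := P X /\ X0 `<=` X.
pose R (s t : {X | Q X}) := `[< proj1_sig s `<=` proj1_sig t >].
have [|||[A [PA X0A]] Amax] :=
  @ZL_preorder _ (exist Q X0 (conj PX0 (@subset_refl _ X0))) R.
- by move=> s; apply/asboolP.
- by move=> r s t /asboolP rs /asboolP st; apply/asboolP; exact: subset_trans st.
- move=> F Ftot.
  pose G : set (set T) := fun X => X = X0 \/ exists2 s, F s & proj1_sig s = X.
  have GP : G `<=` P by move=> Y [->|[s _ <-]] //; case: s => X [].
  have Gtot : total_on G subset.
    move=> Y Z [->|[s Fs <-]] [->|[t Ft <-]].
    - by left.
    - by left; case: (proj2_sig t).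
    - by right; case: (proj2_sig s).
    - by have [/asboolP|/asboolP] := Ftot _ _ Fs Ft; [left|right].
  have X0G : X0 `<=` \bigcup_(X in G) X by apply: bigcup_sup; left.
  exists (exist Q _ (conj (chainP G GP Gtot (or_introl erefl)) X0G)) => s Fs.
  by apply/asboolP => x sx; exists (proj1_sig s) => //; right; exists s.
exists A; split => // B PB AB.
exact/asboolP/(Amax (exist Q B (conj PB (subset_trans X0A AB))) (asboolT AB)).
Qed.
End ZornAbove.

Section Submodules.
Variables (A : idomainType) (E : lmodType A).
Local Open Scope classical_set_scope.

Lemma scalerAC (b d : A) (y : E) : b *: (d *: y) = d *: (b *: y).
Proof. by rewrite !scalerA mulrC. Qed.

Lemma submodule0 : submodule (fun x : E => x = 0).
Proof.
split=> //; split=> [x y -> ->|a x ->]; [exact: addr0 | exact: scaler0].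
Qed.

Lemma scaled_submodule (a : A) : submodule (@scaled _ E a).
Proof.
split; first by exists 0; rewrite scaler0.
split=> [x y [x' ->] [y' ->]|b x [x' ->]].
  by exists (x' + y'); rewrite scalerDr.
by exists (b *: x'); rewrite scalerAC.
Qed.

Lemma bigcup_submodule (F : set (E -> Prop)) :
  F `<=` @submodule A E -> total_on F subset -> F !=set0 ->
  submodule (\bigcup_(X in F) X).
Proof.
move=> Fsub Ftot [X0 FX0]; split; first by exists X0 => //; case: (Fsub _ FX0).
split=> [x y [X FX Xx] [Y FY Yy]|a x [X FX Xx]].
  have [XY|YX] := Ftot _ _ FX FY.
    by exists Y => //; have [_ [YD _]] := Fsub _ FY; apply: YD => //; apply: XY.
  by exists X => //; have [_ [XD _]] := Fsub _ FX; apply: XD => //; apply: YX.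
by exists X => //; have [_ [_ XZ]] := Fsub _ FX; apply: XZ.
Qed.

Definition adjoin (X : E -> Prop) (v : E) : E -> Prop :=
  fun w => exists y r, X y /\ w = y + r *: v.

Lemma submodule_adjoin (X : E -> Prop) (v : E) :
  submodule X -> submodule (adjoin X v).
Proof.
move=> [X0 [XD XZ]]; split; first by exists 0, 0; rewrite scale0r addr0.
split=> [_ _ [y1 [r1 [Xy1 ->]]] [y2 [r2 [Xy2 ->]]]|a _ [y [r [Xy ->]]]].
  by exists (y1 + y2), (r1 + r2); rewrite scalerDl addrACA; split => //; apply: XD.
by exists (a *: y), (a * r); rewrite scalerDr scalerA; split => //; apply: XZ.
Qed.

(* A maximal submodule X above D with N ∩ X ⊆ D must also satisfy N + X = E:
   otherwise adjoining a missing v keeps N ∩ (X + A v) ⊆ D, since a relation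
   n = y + r v either has r a unit (then v ∈ N + X) or r v ∈ D ⊆ X. *)
Lemma quotient_semisimple_of_unit_or_scaled (D : E -> Prop) :
  submodule D -> (forall r : A, r \is a GRing.unit \/ forall v, D (r *: v)) ->
  quotient_semisimple D.
Proof.
move=> subD unit_or_D N subN DN.
have [||X [[subX NXD] DX Xmax]] :=
  @Zorn_bigcup_above _ (fun X => submodule X /\ forall x, N x -> X x -> D x) D.
- by split.
- move=> F FP Ftot FD; split.
    by apply: bigcup_submodule => //; [move=> X /FP[] | exists D].
  by move=> x Nx [X FX Xx]; apply: (proj2 (FP X FX)).
exists X; do 3!split => //; move=> v; apply: contrapT => nv.
have [X0 [XD XZ]] := subX; have [N0 [_ NZ]] := subN.
have NvD x : N x -> adjoin X v x -> D x.
  move=> Nx [y [r [Xy exy]]]; have [ru|rD] := unit_or_D r.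
    exfalso; apply: nv; exists (r^-1 *: x), (- (r^-1 *: y)).
    split; first exact: NZ.
    split; first by rewrite -scaleN1r; exact: (XZ _ _ (XZ _ _ Xy)).
    by rewrite exy scalerDr scalerA mulVr // scale1r addrAC subrr add0r.
  by apply: NXD => //; rewrite exy; apply: XD => //; apply: DX.
have Xv : X v.
  apply: (Xmax (adjoin X v)); first by split; [exact: submodule_adjoin | exact: NvD].
    by move=> x Xx; exists x, 0; rewrite scale0r addr0.
  by exists 0, 1; rewrite scale1r add0r.
by apply: nv; exists 0, v; rewrite add0r.
Qed.

Lemma semisimple_of_quotient_semisimple0 :
  quotient_semisimple (fun x : E => x = 0) -> semisimple E.
Proof.
move=> hQ N [N0 subN].
have [|N' [subN' [_ [NN' NpN']]]] := hQ N (conj N0 subN); first by move=> x ->.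
by exists N'.
Qed.

Fixpoint in_span (s : seq E) : E -> Prop :=
  if s is x :: s' then fun w => exists c, in_span s' (w - c *: x)
  else fun w => w = 0.

Lemma in_spanD (s : seq E) (u w : E) :
  in_span s u -> in_span s w -> in_span s (u + w).
Proof.
elim: s u w => [|x s IH] u w /=; first by move=> -> ->; rewrite addr0.
move=> [c su] [d sw]; exists (c + d).
by rewrite scalerDl opprD addrACA; apply: IH.
Qed.

Lemma in_spanZ (s : seq E) (a : A) (w : E) : in_span s w -> in_span s (a *: w).
Proof.
elim: s w => [|x s IH] w /=; first by move=> ->; rewrite scaler0.
by move=> [c sw]; exists (a * c); rewrite -scalerA -scalerBr; apply: IH.
Qed.

Lemma in_span_sum (s : seq E) (c : 'I_(size s) -> A) :
  in_span s (\sum_(i < size s) c i *: s`_i).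
Proof.
elim: s c => [|x s IH] c /=; first by rewrite big_ord0.
exists (c ord0); rewrite big_ord_recl addrAC subrr add0r.
exact: (IH (fun i => c (lift ord0 i))).
Qed.

End Submodules.

Section Rings.
Variable A : idomainType.
Local Open Scope classical_set_scope.

Lemma exists_maximal_ideal_nonunit (r : A) : r \isn't a GRing.unit ->
  exists2 M, maximal_ideal M & M r.
Proof.
move=> nr.
have [||M [[idM M1] rAM Mmax]] :=
  @Zorn_bigcup_above _ (@Defs.proper_ideal A) (fun y => exists c, y = c * r).
- split; first split; first by exists 0; rewrite mul0r.
    split=> [x y [c ->] [d ->]|b x [c ->]]; first by exists (c + d); rewrite mulrDl.
    by exists (b * c); rewrite mulrA.
  by move=> [c c1]; move/negP: nr; apply; apply/unitrPr; exists c; rewrite mulrC -c1.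
- move=> F FP Ftot FrA; split; last by move=> [I /FP[_ nI1] I1].
  exact: @bigcup_submodule _ A^o F (fun I FI => proj1 (FP I FI)) Ftot (ex_intro _ _ FrA).
exists M; last by apply: rAM; exists 1; rewrite mul1r.
split=> // J idJ MJ; have [J1|nJ1] := pselect (J 1).
  by right=> x; rewrite -(mulr1 x); apply: idJ.2.2.
by left=> x; split=> [Jx|/MJ//]; apply: (Mmax J) => //; split.
Qed.

Lemma local_one_sub_mulr_unit : local_ring A ->
  forall r : A, r \isn't a GRing.unit -> forall c, (1 - r * c) \is a GRing.unit.
Proof.
move=> [M [maxM Muniq]] r nr c; have [[[_ [MD MM]] M1] _] := maxM.
have Mr : M r by have [N maxN Nr] := exists_maximal_ideal_nonunit nr;
  apply/(Muniq N maxN).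
apply: contrapT => /negP nu; have [N maxN N1] := exists_maximal_ideal_nonunit nu.
apply: M1; rewrite -(subrK (r * c) 1); apply: MD; first exact/(Muniq N maxN).
by rewrite mulrC; apply: MM.
Qed.

Lemma valuation_nonunit_maximal : valuation_domain A ->
  maximal_ideal (fun x : A => x \isn't a GRing.unit).
Proof.
move=> hv.
have nonunitM (a x : A) : x \isn't a GRing.unit -> a * x \isn't a GRing.unit.
  by move=> nx; rewrite unitrM negb_and nx orbT.
split; first split; first split.
- by rewrite unitr0.
- split=> [x y nx ny|]; last exact: nonunitM.
  have [[c ->]|[c ->]] := hv x y.
    by rewrite -{1}(mulr1 x) -mulrDr mulrC; apply: nonunitM.
  by rewrite -{2}(mulr1 y) -mulrDr mulrC; apply: nonunitM.
- by rewrite unitr1.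
move=> J [_ [_ JM]] nonunitJ.
have [[u [Ju uu]]|Jnonunit] := pselect (exists u, J u /\ u \is a GRing.unit).
  by right=> x; rewrite -(mulr1 x) -(mulVr uu) mulrA; apply: JM.
left=> x; split=> [Jx|/nonunitJ//]; apply/negP => ux.
by apply: Jnonunit; exists x.
Qed.

(* The radical of [a A]: if (x y)^(n+1) is in [a A] and y = x f, then so is
   x^(2n+2) = (x y)^(n+1) f^(n+1). *)
Lemma valuation_radical_prime (a : A) : valuation_domain A ->
  a \isn't a GRing.unit -> prime_ideal (fun x : A => exists n c, x ^+ n.+1 = a * c).
Proof.
move=> hv na.
have radM b x : (exists n c, x ^+ n.+1 = a * c) -> exists n c, (b * x) ^+ n.+1 = a * c.
  by move=> [n [c e]]; exists n, (b ^+ n.+1 * c); rewrite exprMn e mulrCA.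
split; first split; first split.
- by exists 0%N, 0; rewrite expr1 mulr0.
- split=> [x y rx ry|]; last exact: radM.
  have [[e ->]|[e ->]] := hv x y.
    by have := radM (1 + e) x rx; rewrite mulrDl mul1r mulrC.
  by have := radM (1 + e) y ry; rewrite mulrDl mul1r mulrC addrC.
- move=> [n [c e]]; move/negP: na; apply; apply/unitrPr; exists c.
  by rewrite -e expr1n.
move=> x y [n [c e]]; have hk : (n.*2.+1).+1 = (n.+1).*2 by rewrite doubleS.
have [[f ey]|[f ex]] := hv x y; [right | left];
  exists (n.*2.+1)%N, (c * f ^+ n.+1); rewrite hk -mul2n exprM expr2.
  by rewrite {1}ey mulrAC exprMn e -mulrA.
by rewrite {1}ex mulrAC [y * x]mulrC exprMn e -mulrA.
Qed.

Lemma archimedean_exp_dvd (a b : A) : archimedean_valuation_domain A ->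
  a != 0 -> a \isn't a GRing.unit -> b \isn't a GRing.unit ->
  exists n c, b ^+ n.+1 = a * c.
Proof.
move=> [hv harch] a0 na nb.
have rad_a : exists x, (exists n c, x ^+ n.+1 = a * c) /\ x <> 0.
  by exists a; split; [exists 0%N, 1; rewrite expr1 mulr1 | exact/eqP].
have maxU := valuation_nonunit_maximal hv.
exact/(harch _ _ maxU (valuation_radical_prime hv na) rad_a b).
Qed.

End Rings.

Section SquareScaled.
Variables (A : idomainType) (E : lmodType A).
Hypothesis scaled_sqr : forall (a : A) (v : E), scaled a v <-> scaled (a ^+ 2) v.

Lemma divisible_of_torsion_free : torsion_free E -> divisible E.
Proof.
move=> htf s s0 v.
have [y ey] := proj1 (scaled_sqr s (s *: v)) (ex_intro _ v erefl).
have : s *: (v - s *: y) = 0 by rewrite scalerBr scalerA -expr2 ey subrr.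
by case/htf=> [//|/subr0_eq ->]; exists y.
Qed.

Section Nakayama.
Variable a : A.
Hypothesis one_sub_mul_unit : forall c : A, (1 - a * c) \is a GRing.unit.

(* From a x = a^2 w0 and a w0 = a (c x + w) we get (1 - a c) (a x) = a (a w). *)
Lemma scaled_in_span_behead (x : E) (s : seq E) :
  (forall v, exists2 w, in_span (x :: s) w & a *: v = a *: w) ->
  (forall v, exists2 w, in_span s w & a *: v = a *: w).
Proof.
move=> span_xs.
have [w0 ew0] := proj1 (scaled_sqr a (a *: x)) (ex_intro _ x erefl).
have [v1 [c sw] aw0] := span_xs w0.
set w := v1 - c *: x in sw; set u := 1 - a * c.
have ax : a *: x = a *: (u^-1 *: (a *: w)).
  have axv1 : a *: x = a *: (a *: v1) by rewrite ew0 expr2 -scalerA aw0.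
  have : u *: (a *: x) = a *: (a *: w).
    by rewrite /u scalerBl scale1r {1}axv1 /w !scalerBr !scalerA mulrAC.
  move=> uax; rewrite -[a *: x]scale1r -(mulVr (one_sub_mul_unit c)) -scalerA uax.
  by rewrite scalerAC.
move=> v; have [v' [d sv] ->] := span_xs v.
exists (d *: (u^-1 *: (a *: w)) + (v' - d *: x)).
  by apply: in_spanD => //; do 3!apply: in_spanZ.
by rewrite scalerDr scalerAC -ax scalerBr scalerAC addrCA subrr addr0.
Qed.

Lemma fg_scaler_jacobson0 : finitely_generated E -> forall v : E, a *: v = 0.
Proof.
move=> [s gen].
suff: forall t : seq E, (forall v, exists2 w, in_span t w & a *: v = a *: w) ->
    forall v : E, a *: v = 0.
  by apply=> v; have [c ->] := gen v; exists (\sum_(i < size s) c i *: s`_i);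
    first exact: in_span_sum.
elim=> [|x t IH] span_t v; last exact/IH/(scaled_in_span_behead span_t).
by have [w /= -> ->] := span_t v; rewrite scaler0.
Qed.

End Nakayama.

Lemma scaled_exp (r : A) (v : E) n : scaled r v -> scaled (r ^+ n.+1) v.
Proof.
move=> rv; elim: n => [|n IH]; first by rewrite expr1.
have [y ->] := proj1 (scaled_sqr _ v) IH.
exists (r ^+ n *: y); rewrite scalerA -exprD -exprM.
by rewrite muln2 -addnn !addSn addnS.
Qed.

Lemma archimedean_scaled (a r : A) : archimedean_valuation_domain A ->
  a != 0 -> a \isn't a GRing.unit -> r \isn't a GRing.unit ->
  forall v : E, scaled a (r *: v).
Proof.
move=> harch a0 na nr v.
have [n [c e]] := archimedean_exp_dvd harch a0 na nr.
have [y ->] := scaled_exp n (ex_intro (fun x => r *: v = r *: x) v erefl).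
by exists (c *: y); rewrite e scalerA.
Qed.

Lemma scaled_divisible_submodule (a : A) : archimedean_valuation_domain A ->
  a != 0 -> a \isn't a GRing.unit -> divisible_submodule (@scaled _ E a).
Proof.
move=> harch a0 na s /eqP s0 _ [w ->].
have [us|nus] := boolP (s \is a GRing.unit).
  exists (s^-1 *: (a *: w)); split; first by exists (s^-1 *: w); rewrite scalerAC.
  by rewrite scalerA mulrV // scale1r.
have sa0 : s * a != 0 by rewrite mulf_neq0.
have nsa : s * a \isn't a GRing.unit by rewrite unitrM negb_and nus.
have [y ey] := archimedean_scaled harch sa0 nsa na w.
by exists (a *: y); split; [exists y | rewrite ey scalerA].
Qed.

Lemma local_fg_semisimple : local_ring A -> finitely_generated E -> semisimple E.
Proof.
move=> hA fgE; apply/semisimple_of_quotient_semisimple0.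
apply: quotient_semisimple_of_unit_or_scaled; first exact: submodule0.
move=> r; have [ur|nur] := boolP (r \is a GRing.unit); [left | right] => //.
exact/fg_scaler_jacobson0/fgE/local_one_sub_mulr_unit.
Qed.

Lemma archimedean_divisible_quotient_semisimple : archimedean_valuation_domain A ->
  exists D : E -> Prop,
    [/\ submodule D, divisible_submodule D & quotient_semisimple D].
Proof.
move=> harch.
have [[a [a0 na]]|field] := pselect (exists a : A, a != 0 /\ a \isn't a GRing.unit).
  exists (scaled a); split; [exact: scaled_submodule
    | exact: scaled_divisible_submodule
    | apply: quotient_semisimple_of_unit_or_scaled; first exact: scaled_submodule].
  move=> r; have [ur|nur] := boolP (r \is a GRing.unit); [left | right] => //.
  exact: archimedean_scaled.
exists (fun x : E => x = 0); split; first exact: submodule0.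
  by move=> s _ _ ->; exists 0; rewrite scaler0.
apply: quotient_semisimple_of_unit_or_scaled; first exact: submodule0.
move=> r; have [ur|nur] := boolP (r \is a GRing.unit); [left | right] => // v.
have [->|r0] := eqVneq r 0; first by rewrite scale0r.
by case: field; exists r.
Qed.

End SquareScaled.

Theorem proposition2p4 (A : idomainType) (E : lmodType A)
  (hE : forall (a : A) (v : E), scaled a v <-> scaled (a ^+ 2) v) :
  (torsion_free E -> divisible E) /\
  (local_ring A -> finitely_generated E -> semisimple E) /\
  (archimedean_valuation_domain A ->
     exists D : E -> Prop, submodule D /\ divisible_submodule D /\
       quotient_semisimple D).
Proof.
split; first exact: divisible_of_torsion_free.
split; first exact: local_fg_semisimple.
move=> /(archimedean_divisible_quotient_semisimple hE)[D [subD divD quotD]].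
by exists D.
Qed.
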